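(* Let $(G,+,p)$ be a valued Abelian group. (I) $G$ is of class $\mathcal{O}_0$ if and only if $G$ admits no nonzero bounded group homomorphism into a Banach space. (II) $G$ is of class $\mathcal{O}_\infty$ if and only if $G$ admits an isometric group homomorphism into a Banach space. (III) $G$ is of class $\mathcal{O}_1$ if and only if $G$ admits a nonexpansive group homomorphism with trivial kernel into a Banach space, if and only if $G$ admits a bounded group homomorphism with trivial kernel into a Banach space.
   Context: A value on an Abelian group $G$ is $p\colon G\to[0,\infty)$ with $p(x)=0\iff x=0$, $p(-x)=p(x)$, $p(x+y)\leqslant p(x)+p(y)$. For $x\in G$ let $p_{0*}(x)=\lim_{n\to\infty}p(nx)/n$ (this limit exists). $G$ is of class $\mathcal{O}_0$ if $p_{0*}\equiv0$; of class $\mathcal{O}_\infty$ if $p_{0*}=p$ (equivalently $p(kx)=|k|p(x)$ for all $k\in\mathbb{Z}$, $x\in G$); of class $\mathcal{O}_1$ if $p_{0*}$ is a value (i.e. $p_{0*}(x)=0$ only for $x=0$). A modulus of continuity is a monotone increasing, subadditive $\omega\colon[0,\infty)\to[0,\infty)$ with $\lim_{t\to0^+}\omega(t)=\omega(0)=0$. A group homomorphism $\psi$ from $G$ into a Banach space $E$ is bounded if there is a modulus of continuity $\omega$ with $\|\psi(x)\|\leqslant\omega(p(x))$ for all $x\in G$; it is nonexpansive if $\|\psi(x)\|\leqslant p(x)$ for all $x$; isometric if $\|\psi(x)\|=p(x)$ for all $x$. *)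

From HB Require Import structures.
From mathcomp Require Import all_boot all_order all_algebra.
From mathcomp Require Import all_classical all_reals all_analysis.
Set Implicit Arguments. Unset Strict Implicit. Unset Printing Implicit Defensive.
Import Order.TTheory GRing.Theory Num.Theory.
Import numFieldNormedType.Exports.
Local Open Scope classical_set_scope.
Local Open Scope ring_scope.

Definition is_value {R : realType} {G : zmodType} (p : G -> R) : Prop :=
  (forall x, 0 <= p x) /\
  (forall x, p x = 0 <-> x = 0) /\
  (forall x, p (- x) = p x) /\
  (forall x y, p (x + y) <= p x + p y).

(* p_{0*}(x) = lim_{n -> oo} p(n x)/n  (index shifted to n.+1 to avoid n = 0) *)
Definition p0star {R : realType} {G : zmodType} (p : G -> R) (x : G) : R :=
  limn (fun n : nat => p (x *+ n.+1) / n.+1%:R).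

Definition class_O0 {R : realType} {G : zmodType} (p : G -> R) : Prop :=
  forall x, p0star p x = 0.
Definition class_Oinf {R : realType} {G : zmodType} (p : G -> R) : Prop :=
  forall x, p0star p x = p x.
Definition class_O1 {R : realType} {G : zmodType} (p : G -> R) : Prop :=
  is_value (p0star p).

Definition modulus_of_continuity {R : realType} (w : R -> R) : Prop :=
  (forall t, 0 <= t -> 0 <= w t) /\
  (forall s t, 0 <= s -> s <= t -> w s <= w t) /\
  (forall s t, 0 <= s -> 0 <= t -> w (s + t) <= w s + w t) /\
  w 0 = 0 /\
  (w t @[t --> 0^'+] --> 0).

Definition is_group_hom {G H : zmodType} (f : G -> H) : Prop :=
  forall x y, f (x + y) = f x + f y.

Definition bounded_hom {R : realType} {G : zmodType} {E : normedModType R}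
  (p : G -> R) (psi : G -> E) : Prop :=
  is_group_hom psi /\
  exists w : R -> R, modulus_of_continuity w /\ forall x, `|psi x| <= w (p x).

Definition nonexpansive_hom {R : realType} {G : zmodType} {E : normedModType R}
  (p : G -> R) (psi : G -> E) : Prop :=
  is_group_hom psi /\ forall x, `|psi x| <= p x.

Definition isometric_hom {R : realType} {G : zmodType} {E : normedModType R}
  (p : G -> R) (psi : G -> E) : Prop :=
  is_group_hom psi /\ forall x, `|psi x| = p x.

Definition trivial_kernel {G H : zmodType} (f : G -> H) : Prop :=
  forall x, f x = 0 -> x = 0.

From HB Require Import structures.
From mathcomp Require Import all_boot all_order all_algebra.
From mathcomp Require Import all_classical all_reals all_analysis.
From mathcomp Require Import lra.
Import Order.TTheory GRing.Theory Num.Theory.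
Import numFieldNormedType.Exports.
Set Implicit Arguments. Unset Strict Implicit. Unset Printing Implicit Defensive.
Local Open Scope classical_set_scope.
Local Open Scope ring_scope.

(* The limit p_{0*}(x) = lim p(nx)/n exists and equals inf_n p(nx)/n by
   Fekete's lemma, so p_{0*} is a subadditive, Z-homogeneous minorant of p.
   A bounded homomorphism psi with modulus w satisfies
   |psi x| = |psi (nx)|/n <= w(p(nx))/n <= (p(nx)/n + 1/n) w(1), hence
   |psi x| <= w(1) p_{0*}(x).  Conversely every subadditive, homogeneous,
   symmetric q is realised isometrically in l^oo(G): a Hahn-Banach argument on
   abelian groups (Zorn's lemma applied to sublinear minorants) yields for each
   a an additive f_a <= q with f_a(a) = q(a), and x |-> (f_a(x))_a is the
   embedding.  Applied to q = p_{0*}, resp. q = p, this gives (I)-(III). *)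

Section Linfty.
Variables (R : realType) (I : Type).

Record linfty := Linfty {
  linfty_fun :> I -> R ;
  linfty_bounded : exists M : R, forall i, `|linfty_fun i| <= M }.

HB.instance Definition _ := gen_eqMixin linfty.
HB.instance Definition _ := gen_choiceMixin linfty.

Lemma linftyP (u v : linfty) : (forall i, u i = v i) -> u = v.
Proof.
case: u v => f hf [g hg] /= /funext efg; subst g.
by rewrite (Prop_irrelevance hf hg).
Qed.

Lemma linfty_bounded0 : exists M : R, forall i : I, `|(0 : R)| <= M.
Proof. by exists 0 => i; rewrite normr0. Qed.

Lemma linfty_boundedN (u : linfty) : exists M : R, forall i, `|- u i| <= M.
Proof. by case: (linfty_bounded u) => M hM; exists M => i; rewrite normrN. Qed.

Lemma linfty_boundedD (u v : linfty) : exists M : R, forall i, `|u i + v i| <= M.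
Proof.
case: (linfty_bounded u) => M hM; case: (linfty_bounded v) => N hN.
by exists (M + N) => i; rewrite (le_trans (ler_normD _ _)) // lerD.
Qed.

Lemma linfty_boundedZ (a : R) (u : linfty) : exists M : R, forall i, `|a * u i| <= M.
Proof.
case: (linfty_bounded u) => M hM; exists (`|a| * M) => i.
by rewrite normrM ler_wpM2l.
Qed.

Definition linfty_zero := Linfty linfty_bounded0.
Definition linfty_opp u := Linfty (linfty_boundedN u).
Definition linfty_add u v := Linfty (linfty_boundedD u v).
Definition linfty_scale a u := Linfty (linfty_boundedZ a u).

Lemma linfty_addA : associative linfty_add.
Proof. by move=> u v w; apply: linftyP => i /=; rewrite addrA. Qed.

Lemma linfty_addC : commutative linfty_add.
Proof. by move=> u v; apply: linftyP => i /=; rewrite addrC. Qed.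

Lemma linfty_add0 : left_id linfty_zero linfty_add.
Proof. by move=> u; apply: linftyP => i /=; rewrite add0r. Qed.

Lemma linfty_addN : left_inverse linfty_zero linfty_opp linfty_add.
Proof. by move=> u; apply: linftyP => i /=; rewrite addNr. Qed.

HB.instance Definition _ :=
  GRing.isZmodule.Build linfty linfty_addA linfty_addC linfty_add0 linfty_addN.

Lemma linfty_scaleA a b u : linfty_scale a (linfty_scale b u) = linfty_scale (a * b) u.
Proof. by apply: linftyP => i /=; rewrite mulrA. Qed.

Lemma linfty_scale1 : left_id 1 linfty_scale.
Proof. by move=> u; apply: linftyP => i /=; rewrite mul1r. Qed.

Lemma linfty_scaleDr : right_distributive linfty_scale +%R.
Proof. by move=> a u v; apply: linftyP => i /=; rewrite mulrDr. Qed.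

Lemma linfty_scaleDl u : {morph linfty_scale^~ u : a b / a + b}.
Proof. by move=> a b; apply: linftyP => i /=; rewrite mulrDl. Qed.

HB.instance Definition _ := GRing.Zmodule_isLmodule.Build R linfty
  linfty_scaleA linfty_scale1 linfty_scaleDr linfty_scaleDl.

(* [0] is added so that the supremum is [0] when [I] is empty. *)
Definition linfty_norm (u : linfty) : R := sup ([set `|u i| | i in setT] `|` [set 0]).

Lemma linfty_norm_has_ubound (u : linfty) :
  has_ubound ([set `|u i| | i in setT] `|` [set 0]).
Proof.
case: (linfty_bounded u) => M hM; exists (Num.max M 0) => _ [[i _ <-]|->].
  by rewrite le_max hM.
by rewrite le_max lexx orbT.
Qed.

Lemma le_linfty_norm (u : linfty) i : `|u i| <= linfty_norm u.
Proof. by apply: (ub_le_sup (linfty_norm_has_ubound u)); left; exists i. Qed.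

Lemma linfty_norm_ge0 (u : linfty) : 0 <= linfty_norm u.
Proof. by apply: (ub_le_sup (linfty_norm_has_ubound u)); right. Qed.

Lemma linfty_norm_le (u : linfty) c :
  0 <= c -> (forall i, `|u i| <= c) -> linfty_norm u <= c.
Proof.
move=> c0 hc; apply: ge_sup; first by exists 0; right.
by move=> _ [[i _ <-]|->].
Qed.

Lemma linfty_normD (u v : linfty) : linfty_norm (u + v) <= linfty_norm u + linfty_norm v.
Proof.
apply: linfty_norm_le => [|i]; first by rewrite addr_ge0 ?linfty_norm_ge0.
by rewrite (le_trans (ler_normD (u i) (v i))) // lerD ?le_linfty_norm.
Qed.

Lemma linfty_normZ_le (a : R) (u : linfty) :
  linfty_norm (a *: u) <= `|a| * linfty_norm u.
Proof.
apply: linfty_norm_le => [|i]; first by rewrite mulr_ge0 ?linfty_norm_ge0.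
by rewrite /= normrM ler_wpM2l ?le_linfty_norm.
Qed.

Lemma linfty_normZ (a : R) (u : linfty) : linfty_norm (a *: u) = `|a| * linfty_norm u.
Proof.
apply/eqP; rewrite eq_le linfty_normZ_le /=.
have [->|a0] := eqVneq a 0; first by rewrite normr0 mul0r linfty_norm_ge0.
have {1}-> : u = a^-1 *: (a *: u) by rewrite scalerA mulVf ?scale1r.
rewrite (le_trans (ler_wpM2l _ (linfty_normZ_le _ _))) //.
by rewrite mulrA normrV ?unitfE // mulfV ?normr_eq0 // mul1r.
Qed.

Lemma linfty_norm_eq0 (u : linfty) : linfty_norm u = 0 -> u = 0.
Proof.
by move=> u0; apply: linftyP => i; apply/eqP; rewrite -normr_le0 -u0 le_linfty_norm.
Qed.

HB.instance Definition _ :=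
  Lmodule_isNormed.Build R linfty linfty_normD linfty_normZ linfty_norm_eq0.

Lemma linfty_normE (u : linfty) : `|u| = linfty_norm u.
Proof. by []. Qed.

Lemma linfty_ball_coord (c u : linfty) (e : R) i : ball c e u -> `|c i - u i| < e.
Proof. by rewrite -ball_normE /= => /(le_lt_trans (le_linfty_norm (c - u) i)). Qed.

Lemma linfty_ball_lim_le (F : set_system linfty) (g : I -> R) (c : linfty) (e : R) :
  ProperFilter F -> (forall i, (fun u : linfty => u i) @ F --> g i) ->
  F (ball c e) -> forall i, `|c i - g i| <= e.
Proof.
move=> FF Fg Fce i; rewrite ler_distlC; apply/andP; split.
- apply: (cvgr_to_ge (Fg i)); apply: filterS Fce => u /(linfty_ball_coord i).
  by rewrite ltr_distlC => /andP[/ltW].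
- apply: (cvgr_to_le (Fg i)); apply: filterS Fce => u /(linfty_ball_coord i).
  by rewrite ltr_distlC => /andP[_ /ltW].
Qed.

Lemma linfty_complete (F : set_system linfty) : ProperFilter F -> cauchy F -> cvg F.
Proof.
move=> FF /cauchyP Fc.
have coord_cauchy i : cauchy ((fun u : linfty => u i) @ F).
  apply/cauchyP => e e0; have [c Fce] := Fc e e0; exists (c i).
  suff : F [set u | ball (c i) e (u i)] by [].
  by apply: filterS Fce => u /(linfty_ball_coord i); rewrite -ball_normE.
pose g i := lim ((fun u : linfty => u i) @ F).
have Fg i : (fun u : linfty => u i) @ F --> g i by apply: cauchy_cvg.
have g_bounded : exists M : R, forall i, `|g i| <= M.
  have [c Fc1] := Fc 1 ltr01; exists (linfty_norm c + 1) => i.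
  rewrite -[g i](subrKC (c i)) (le_trans (ler_normD _ _)) //.
  by rewrite distrC lerD ?le_linfty_norm ?(linfty_ball_lim_le _ Fg Fc1).
apply/cvg_ex; exists (Linfty g_bounded); apply/cvg_ballP => e e0.
have e30 : 0 < e / 3 by rewrite divr_gt0.
have [c Fce] := Fc _ e30; apply: filterS (Fce) => u cu.
rewrite -ball_normE /=; apply: (@le_lt_trans _ _ (e / 3 + e / 3)); last by lra.
apply: linfty_norm_le => [|i /=]; first by rewrite addr_ge0 // ltW.
rewrite -(subrKA (c i)) (le_trans (ler_normD _ _)) // distrC.
by rewrite lerD ?(linfty_ball_lim_le _ Fg Fce) // ltW ?(linfty_ball_coord i cu).
Qed.

End Linfty.

HB.instance Definition _ (R : realType) (I : Type) :=
  Uniform_isComplete.Build (linfty R I) (@linfty_complete R I).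

Section GroupHom.
Variables (G H : zmodType) (f : G -> H).
Hypothesis f_hom : is_group_hom f.

Lemma group_hom0 : f 0 = 0.
Proof. by apply: (addrI (f 0)); rewrite -f_hom !addr0. Qed.

Lemma group_homN x : f (- x) = - f x.
Proof. by apply: (addrI (f x)); rewrite -f_hom !subrr group_hom0. Qed.

Lemma group_homMn x n : f (x *+ n) = f x *+ n.
Proof.
elim: n => [|n IH]; first by rewrite !mulr0n group_hom0.
by rewrite !mulrS f_hom IH.
Qed.

End GroupHom.

Section InfImage.
Variables (R : realType) (T : Type) (A : set T) (f : T -> R).

Lemma inf_image_le c t : (forall s, A s -> c <= f s) -> A t -> inf (f @` A) <= f t.
Proof.
move=> hc At; apply: ge_inf; last by exists t.
by exists c => _ [s As <-]; apply: hc.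
Qed.

Lemma le_inf_image c t : A t -> (forall s, A s -> c <= f s) -> c <= inf (f @` A).
Proof.
move=> At hc; apply: lb_le_inf; first by exists (f t), t.
by move=> _ [s As <-]; apply: hc.
Qed.

End InfImage.

Section Sublinear.
Variables (R : realType) (G : zmodType).

Definition subadditive (r : G -> R) := forall x y, r (x + y) <= r x + r y.

Definition nat_homogeneous (r : G -> R) := forall x n, r (x *+ n) = r x *+ n.

Lemma nat_homogeneous0 r : nat_homogeneous r -> r 0 = 0.
Proof. by move=> hr; have := hr 0 0; rewrite !mulr0n. Qed.

Lemma sublinear_oppr_le r : subadditive r -> nat_homogeneous r ->
  forall y, - r (- y) <= r y.
Proof. by move=> sr hr y; have := sr y (- y); rewrite subrr nat_homogeneous0 //; lra. Qed.

(* [shift_inf r x] is a sublinear minorant of [r] with value at most [- r x]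
   at [- x]; a minimal sublinear [r] is therefore odd, hence additive. *)
Definition shift_inf (r : G -> R) (x y : G) : R :=
  inf [set r (y + x *+ n) - r x *+ n | n in [set: nat]].

Section ShiftInf.
Variable r : G -> R.
Hypotheses (sr : subadditive r) (hr : nat_homogeneous r).
Variable x : G.

Lemma shift_inf_term_ge y n : - r (- y) <= r (y + x *+ n) - r x *+ n.
Proof. by rewrite -hr; have := sr (y + x *+ n) (- y); rewrite addrC addKr; lra. Qed.

Lemma shift_inf_le y n : shift_inf r x y <= r (y + x *+ n) - r x *+ n.
Proof. by apply: (inf_image_le (c := - r (- y))) => // m _; apply: shift_inf_term_ge. Qed.

Lemma shift_inf_ge y c :
  (forall n, c <= r (y + x *+ n) - r x *+ n) -> c <= shift_inf r x y.
Proof. by move=> h; apply: (le_inf_image (t := 0%N)) => // n _; apply: h. Qed.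

Lemma shift_inf_le_fun y : shift_inf r x y <= r y.
Proof. by have := shift_inf_le y 0; rewrite !mulr0n addr0 subr0. Qed.

Lemma shift_inf_opp : shift_inf r x (- x) <= - r x.
Proof.
by have := shift_inf_le (- x) 1; rewrite !mulr1n addNr (nat_homogeneous0 hr) sub0r.
Qed.

Lemma shift_inf_subadditive : subadditive (shift_inf r x).
Proof.
move=> y z.
have split_le n m : shift_inf r x (y + z) <=
    (r (y + x *+ n) - r x *+ n) + (r (z + x *+ m) - r x *+ m).
  apply: le_trans (shift_inf_le _ (n + m)) _.
  by have := sr (y + x *+ n) (z + x *+ m); rewrite addrACA -mulrnDr mulrnDr; lra.
suff : shift_inf r x (y + z) - shift_inf r x y <= shift_inf r x z by lra.
apply: shift_inf_ge => m; suff : shift_inf r x (y + z) -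
  (r (z + x *+ m) - r x *+ m) <= shift_inf r x y by lra.
by apply: shift_inf_ge => n; have := split_le n m; lra.
Qed.

Lemma shift_inf_homogeneous : nat_homogeneous (shift_inf r x).
Proof.
move=> y [|k].
  rewrite !mulr0n; apply/eqP; rewrite eq_le; apply/andP; split.
    by have := shift_inf_le_fun 0; rewrite (nat_homogeneous0 hr).
  apply: shift_inf_ge => n; have := shift_inf_term_ge 0 n.
  by rewrite oppr0 (nat_homogeneous0 hr) oppr0.
have k0 : 0 < k.+1%:R :> R by rewrite ltr0Sn.
apply/eqP; rewrite eq_le; apply/andP; split.
  rewrite -mulr_natr -ler_pdivrMr //; apply: shift_inf_ge => n; rewrite ler_pdivrMr //.
  apply: le_trans (shift_inf_le _ (n * k.+1)) _.
  by rewrite !mulrnA -mulrnDl hr -mulrnBl mulr_natr.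
apply: shift_inf_ge => n.
apply: le_trans (_ : (r (y + x *+ n) - r x *+ n) *+ k.+1 <= _).
  by rewrite ler_pMn2r // shift_inf_le.
rewrite mulrnBl.
have -> : r (y + x *+ n) *+ k.+1 = r (y *+ k.+1 + x *+ n + x *+ (n * k)).
  by rewrite -hr mulrnDl -mulrnA mulnS mulrnDr addrA.
have -> : r x *+ n *+ k.+1 = r x *+ n + r x *+ (n * k).
  by rewrite -mulrnA mulnS mulrnDr.
by have := sr (y *+ k.+1 + x *+ n) (x *+ (n * k)); rewrite hr; lra.
Qed.

End ShiftInf.

Definition sublinear_below (r0 r : G -> R) :=
  [/\ subadditive r, nat_homogeneous r & forall y, r y <= r0 y].

Definition chain_inf (C : set (G -> R)) (y : G) : R := inf [set r y | r in C].

Section ChainInf.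
Variables (r0 : G -> R) (C : set (G -> R)).
Hypotheses (C_r0 : C r0) (C_below : forall r, C r -> sublinear_below r0 r).
Hypothesis C_total : forall r1 r2, C r1 -> C r2 ->
  (forall y, r1 y <= r2 y) \/ (forall y, r2 y <= r1 y).

Lemma chain_inf_le r y : C r -> chain_inf C y <= r y.
Proof.
move=> Cr; apply: (inf_image_le (c := - r0 (- y))) => // s /C_below[ss hs s_le].
by apply: le_trans (sublinear_oppr_le ss hs y); rewrite lerN2.
Qed.

Lemma chain_inf_ge y c : (forall r, C r -> c <= r y) -> c <= chain_inf C y.
Proof. by move=> h; apply: (le_inf_image (t := r0)). Qed.

Lemma chain_inf_subadditive : subadditive (chain_inf C).
Proof.
move=> y z.
have le_sum r1 r2 : C r1 -> C r2 -> chain_inf C (y + z) <= r1 y + r2 z.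
  move=> C1 C2; have [s1 _ _] := C_below C1; have [s2 _ _] := C_below C2.
  case: (C_total C1 C2) => h.
    by apply: le_trans (chain_inf_le _ C1) (le_trans (s1 y z) _); rewrite lerD2l.
  by apply: le_trans (chain_inf_le _ C2) (le_trans (s2 y z) _); rewrite lerD2r.
rewrite -lerBlDl; apply: chain_inf_ge => r2 C2; rewrite lerBlDl -lerBlDr.
by apply: chain_inf_ge => r1 C1; rewrite lerBlDr; apply: le_sum.
Qed.

Lemma chain_inf_homogeneous : nat_homogeneous (chain_inf C).
Proof.
move=> y [|k].
  rewrite !mulr0n; apply/eqP; rewrite eq_le; apply/andP; split.
    by have [_ h _] := C_below C_r0; rewrite -(nat_homogeneous0 h) chain_inf_le.
  by apply: chain_inf_ge => r /C_below[_ h _]; rewrite nat_homogeneous0.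
have k0 : 0 < k.+1%:R :> R by rewrite ltr0Sn.
apply/eqP; rewrite eq_le; apply/andP; split.
  rewrite -mulr_natr -ler_pdivrMr //; apply: chain_inf_ge => r Cr.
  have [_ h _] := C_below Cr.
  by rewrite ler_pdivrMr // mulr_natr -h chain_inf_le.
apply: chain_inf_ge => r Cr; have [_ h _] := C_below Cr.
by rewrite h ler_pMn2r // chain_inf_le.
Qed.

Lemma chain_inf_below : sublinear_below r0 (chain_inf C).
Proof.
split; [exact: chain_inf_subadditive|exact: chain_inf_homogeneous|].
by move=> y; exact: chain_inf_le.
Qed.

End ChainInf.

Lemma exists_minimal_sublinear_below (r0 : G -> R) :
  subadditive r0 -> nat_homogeneous r0 ->
  exists r, sublinear_below r0 r /\ forall s, subadditive s -> nat_homogeneous s ->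
    (forall y, s y <= r y) -> s = r.
Proof.
move=> s0 h0.
pose T := {r : G -> R | sublinear_below r0 r}.
pose pointwise_ge (s t : T) := `[< forall y, sval t y <= sval s y >].
have [t t_max] : exists t : T, forall s, pointwise_ge t s -> s = t.
  apply: Zorn.
  - by move=> s; apply/asboolP.
  - move=> a b c /asboolP ab /asboolP bc.
    by apply/asboolP => y; apply: le_trans (bc y) (ab y).
  - move=> [a Sa] [b Sb] /asboolP ab /asboolP ba.
    by apply: eq_exist; apply: funext => y; apply/eqP; rewrite eq_le ab ba.
  move=> A A_total.
  (* [r0] is added to make the chain nonempty. *)
  pose C := [set r | r = r0 \/ exists2 s, A s & sval s = r].
  have C_below r : C r -> sublinear_below r0 r.
    by case=> [->|[s _ <-]]; [split|exact: svalP].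
  have C_total r1 r2 : C r1 -> C r2 ->
      (forall y, r1 y <= r2 y) \/ (forall y, r2 y <= r1 y).
    case=> [->|[s1 As1 <-]] C2; first by right => y; have [_ _] := C_below _ C2.
    case: C2 => [->|[s2 As2 <-]]; first by left => y; have [_ _] := svalP s1.
    by case: (A_total s1 s2 As1 As2) => /asboolP h; [right|left].
  exists (exist _ _ (chain_inf_below (or_introl erefl) C_below C_total)).
  by move=> s As; apply/asboolP => y /=; apply: (chain_inf_le C_below); right; exists s.
exists (sval t); split; first exact: svalP.
move=> s ss hs s_le; have [_ _ t_le] := svalP t.
have Ss : sublinear_below r0 s by split=> // y; apply: le_trans (s_le y) (t_le y).
by have := t_max (exist _ _ Ss) (asboolT s_le) => /(congr1 sval).
Qed.

Lemma minimal_sublinear_additive (r : G -> R) :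
  subadditive r -> nat_homogeneous r ->
  (forall s, subadditive s -> nat_homogeneous s -> (forall y, s y <= r y) -> s = r) ->
  is_group_hom r.
Proof.
move=> sr hr r_min.
have rN x : r (- x) = - r x.
  have shift_r : shift_inf r x = r := r_min _ (shift_inf_subadditive sr hr x)
    (shift_inf_homogeneous sr hr x) (shift_inf_le_fun sr hr x).
  apply/eqP; rewrite eq_le -{1}shift_r shift_inf_opp //=.
  by rewrite lerNl sublinear_oppr_le.
move=> x y; apply/eqP; rewrite eq_le sr /=.
by have := sr (- x) (- y); rewrite -opprD !rN; lra.
Qed.

Lemma hahn_banach_group (q : G -> R) : subadditive q -> nat_homogeneous q ->
  forall x0, exists f : G -> R,
    [/\ is_group_hom f, forall y, f y <= q y & f x0 = q x0].
Proof.
move=> sq hq x0.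
have [f [[sf hf f_le] f_min]] := exists_minimal_sublinear_below
  (shift_inf_subadditive sq hq x0) (shift_inf_homogeneous sq hq x0).
have f_hom := minimal_sublinear_additive sf hf f_min.
have f_le_q y : f y <= q y by apply: le_trans (f_le y) (shift_inf_le_fun sq hq x0 y).
exists f; split => //; apply/eqP; rewrite eq_le f_le_q /=.
by have := le_trans (f_le (- x0)) (shift_inf_opp sq hq x0); rewrite group_homN // lerN2.
Qed.

End Sublinear.

Section Value.
Variables (R : realType) (G : zmodType) (p : G -> R).
Hypothesis hp : is_value p.

Lemma value_ge0 x : 0 <= p x. Proof. by case: hp. Qed.

Lemma value_eq0 x : p x = 0 <-> x = 0. Proof. by case: hp => _ []. Qed.

Lemma valueN x : p (- x) = p x. Proof. by case: hp => _ [_ []]. Qed.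

Lemma valueD : subadditive p. Proof. by case: hp => _ [_ [_]]. Qed.

Lemma value0 : p 0 = 0. Proof. exact/value_eq0. Qed.

Lemma valueMn x n : p (x *+ n) <= p x *+ n.
Proof.
elim: n => [|n IH]; first by rewrite !mulr0n value0.
by rewrite !mulrS (le_trans (valueD _ _)) // lerD2l.
Qed.

Definition value_ratio x n := p (x *+ n.+1) / n.+1%:R.

Definition value_inf x := inf [set value_ratio x n | n in [set: nat]].

Lemma value_ratio_ge0 x n : 0 <= value_ratio x n.
Proof. by rewrite divr_ge0 ?value_ge0. Qed.

Lemma value_inf_le x n : value_inf x <= value_ratio x n.
Proof. by apply: (inf_image_le (c := 0)) => // k _; apply: value_ratio_ge0. Qed.

Lemma value_inf_ge x c : (forall n, c <= value_ratio x n) -> c <= value_inf x.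
Proof. by move=> h; apply: (le_inf_image (t := 0%N)) => // n _; apply: h. Qed.

Lemma value_inf_ge0 x : 0 <= value_inf x.
Proof. by apply: value_inf_ge => n; apply: value_ratio_ge0. Qed.

Lemma value_inf0 : value_inf 0 = 0.
Proof.
apply/eqP; rewrite eq_le value_inf_ge0 andbT.
by apply: le_trans (value_inf_le 0 0) _; rewrite /value_ratio mul0rn value0 mul0r.
Qed.

Lemma value_inf_leMn x N : (0 < N)%N -> value_inf x <= p (x *+ N) / N%:R.
Proof. by case: N => // n _; apply: value_inf_le. Qed.

Lemma value_inf_geMn x c :
  (forall N, (0 < N)%N -> c <= p (x *+ N) / N%:R) -> c <= value_inf x.
Proof. by move=> h; apply: value_inf_ge => n; apply: h. Qed.

Lemma value_inf_le_value x : value_inf x <= p x.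
Proof. by have := value_inf_leMn x (ltn0Sn 0); rewrite mulr1n divr1. Qed.

(* Fekete's estimate: divide [N.+1] by [m.+1] with remainder. *)
Lemma value_ratio_le x m N :
  value_ratio x N <= value_ratio x m + m.+1%:R * p x / N.+1%:R.
Proof.
set M := m.+1; set N1 := N.+1; set q := (N1 %/ M)%N; set r := (N1 %% M)%N.
have M0 : 0 < M%:R :> R by rewrite ltr0Sn.
have N0 : 0 < N1%:R :> R by rewrite ltr0Sn.
have N1E : x *+ N1 = x *+ M *+ q + x *+ r by rewrite -mulrnA -mulrnDr mulnC -divn_eq.
have le_qr : p (x *+ N1) <= p (x *+ M) *+ q + p x *+ r.
  by rewrite N1E (le_trans (valueD _ _)) // lerD // valueMn.
have le_q : p (x *+ M) *+ q <= p (x *+ M) * N1%:R / M%:R.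
  rewrite ler_pdivlMr // -[_ *+ q]mulr_natr -mulrA ler_wpM2l ?value_ge0 // -natrM ler_nat.
  exact: leq_divM.
have le_r : p x *+ r <= M%:R * p x.
  by rewrite -[p x *+ r]mulr_natl ler_wpM2r ?value_ge0 // ler_nat ltnW // ltn_pmod.
rewrite /value_ratio -/N1 -/M ler_pdivrMr // mulrDl mulfVK ?gt_eqF //.
by rewrite mulrAC (le_trans le_qr) // lerD.
Qed.

Lemma cvg_value_ratio x : value_ratio x n @[n --> \oo] --> value_inf x.
Proof.
apply/cvgrPdist_lt => e e0.
have e20 : 0 < e / 2 by rewrite divr_gt0.
have [_ [m _ <-] ratio_m] : exists2 v, [set value_ratio x n | n in [set: nat]] v &
    v < value_inf x + e / 2.
  apply: inf_adherent => //; split; first by exists (value_ratio x 0), 0%N.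
  by exists 0 => _ [n _ <-]; apply: value_ratio_ge0.
have err_cvg : m.+1%:R * p x * harmonic n @[n --> \oo] --> 0.
  by rewrite -(mulr0 (m.+1%:R * p x)); apply: cvgMl_tmp; apply: cvg_harmonic.
near=> N.
have err_small : m.+1%:R * p x / N.+1%:R < e / 2.
  by near: N; exact: cvgr_lt _ err_cvg _ e20.
rewrite distrC ger0_norm ?subr_ge0 ?value_inf_le //.
move: err_small (value_ratio_le x m N); set err := _ / N.+1%:R; lra.
Unshelve. all: by end_near. Qed.

Lemma p0starE : p0star p = value_inf.
Proof. by apply/funext => x; apply: cvg_lim => //; apply: cvg_value_ratio. Qed.

Lemma value_infN x : value_inf (- x) = value_inf x.
Proof.
by congr inf; apply: eq_imagel => n _; rewrite /value_ratio mulNrn valueN.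
Qed.

Lemma value_inf_subadditive : subadditive value_inf.
Proof.
move=> x y; rewrite -subr_ge0.
apply: (cvgr_to_ge (cvgB (cvgD (cvg_value_ratio (x := x)) (cvg_value_ratio (x := y)))
  (cvg_value_ratio (x := x + y)))).
apply: nearW => n /=.
rewrite subr_ge0 /value_ratio -mulrDl ler_pM2r ?invr_gt0 ?ltr0Sn //.
by rewrite mulrnDl valueD.
Qed.

Lemma value_inf_homogeneous : nat_homogeneous value_inf.
Proof.
move=> x [|k].
  by rewrite !mulr0n value_inf0.
have k0 : 0 < k.+1%:R :> R by rewrite ltr0Sn.
apply/eqP; rewrite eq_le; apply/andP; split.
  rewrite -[value_inf x *+ _]mulr_natr -ler_pdivrMr //; apply: value_inf_geMn => N N0.
  rewrite ler_pdivrMr //; apply: le_trans (value_inf_leMn _ N0) _.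
  rewrite -mulrnA mulnC mulrnA mulrAC ler_pM2r ?invr_gt0 ?ltr0n // mulr_natr.
  exact: valueMn.
apply: value_inf_geMn => N N0.
have NK0 : (0 < N * k.+1)%N by rewrite muln_gt0 N0.
rewrite -[value_inf x *+ _]mulr_natr ler_pdivlMr ?ltr0n // mulrAC -mulrnA mulnC.
by have := value_inf_leMn x NK0; rewrite ler_pdivlMr ?ltr0n // natrM mulrA.
Qed.

Lemma value_inf_id : nat_homogeneous p -> value_inf = p.
Proof.
move=> hom; apply/funext => x; apply/eqP; rewrite eq_le value_inf_le_value.
by apply: value_inf_ge => n; rewrite /value_ratio hom -[p x *+ _]mulr_natr mulfK ?pnatr_eq0.
Qed.

End Value.

Section Embedding.
Variables (R : realType) (G : zmodType).

Lemma modulus_le_linear (w : R -> R) : modulus_of_continuity w ->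
  forall t, 0 <= t -> w t <= (t + 1) * w 1.
Proof.
move=> [w_ge0 [w_mono [w_sub [w0 _]]]] t t0.
have w_nat n : w n%:R <= w 1 *+ n.
  elim: n => [|n IH]; first by rewrite w0 mulr0n.
  rewrite -addn1 natrD mulrnDr mulr1n (le_trans (w_sub _ _ _ _)) ?ler0n //.
  by rewrite lerD2r.
have t_le : t <= (Num.truncn t).+1%:R by rewrite ltW // -truncn_le_nat.
apply: le_trans (w_mono _ _ t0 t_le) (le_trans (w_nat _) _).
rewrite -mulr_natl ler_wpM2r ?w_ge0 ?ler01 //.
by rewrite -addn1 natrD lerD2r truncn_le.
Qed.

Lemma modulus_id : modulus_of_continuity (fun t : R => t).
Proof. by do 4!split => //; apply: cvg_at_right_filter; exact: cvg_id. Qed.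

Lemma nonexpansive_bounded_hom (p : G -> R) (E : normedModType R) (psi : G -> E) :
  nonexpansive_hom p psi -> bounded_hom p psi.
Proof. by move=> [hom le_p]; split => //; exists id; split => //; exact: modulus_id. Qed.

Lemma isometric_hom_homogeneous (p : G -> R) (E : normedModType R) (psi : G -> E) :
  isometric_hom p psi -> nat_homogeneous p.
Proof. by move=> [hom psi_p] x n; rewrite -!psi_p group_homMn // normrMn. Qed.

Lemma bounded_hom_le_value_inf (p : G -> R) (E : normedModType R) (psi : G -> E) :
  is_value p -> bounded_hom p psi ->
  exists2 c : R, 0 <= c & forall x, `|psi x| <= c * value_inf p x.
Proof.
move=> hp [hom [w [w_mod psi_w]]].
have w1_ge0 : 0 <= w 1 by case: w_mod => ->.
exists (w 1) => // x.
have le_ratio n : `|psi x| <= w 1 * value_ratio p x n + w 1 * harmonic n.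
  have n0 : 0 < n.+1%:R :> R by rewrite ltr0Sn.
  rewrite /harmonic /value_ratio /= -mulrDr -{2}[n.+1%:R^-1]mul1r -mulrDl mulrA.
  rewrite ler_pdivlMr // mulr_natr -normrMn -group_homMn // mulrC.
  exact: le_trans (psi_w _) (modulus_le_linear w_mod (value_ge0 hp _)).
have cvg_bound : w 1 * value_ratio p x n + w 1 * harmonic n @[n --> \oo] -->
    w 1 * value_inf p x + w 1 * 0.
  by apply: cvgD; apply: cvgMl_tmp; [exact: cvg_value_ratio|exact: cvg_harmonic].
rewrite mulr0 addr0 in cvg_bound.
by apply: (cvgr_to_ge cvg_bound); apply: nearW.
Qed.

Lemma bounded_hom_value_inf_eq0 (p : G -> R) (E : normedModType R) (psi : G -> E) x :
  is_value p -> bounded_hom p psi -> value_inf p x = 0 -> psi x = 0.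
Proof.
move=> hp /(bounded_hom_le_value_inf hp)[c _ psi_le] px0.
by apply/normr0_eq0/eqP; rewrite eq_le normr_ge0 andbT -(mulr0 c) -px0.
Qed.

Lemma sublinear_isometric_embedding (q : G -> R) :
  subadditive q -> nat_homogeneous q -> (forall x, q (- x) = q x) ->
  exists psi : G -> linfty R G, is_group_hom psi /\ forall x, `|psi x| = q x.
Proof.
move=> sq hq qN.
have [f f_spec] := choice (hahn_banach_group sq hq).
have f_hom a : is_group_hom (f a) by case: (f_spec a).
have f_bounded a x : `|f a x| <= q x.
  have [_ f_le _] := f_spec a; rewrite ler_norml f_le andbT.
  by rewrite lerNl -qN -group_homN // f_le.
pose psi x := Linfty (ex_intro (fun M => forall a, `|f a x| <= M) (q x) (f_bounded ^~ x)).
exists psi; split => [x y|x]; first by apply: linftyP => a /=; rewrite f_hom.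
rewrite linfty_normE; apply/eqP; rewrite eq_le; apply/andP; split.
  apply: linfty_norm_le => [|a]; last exact: f_bounded.
  by have := sq x (- x); rewrite subrr (nat_homogeneous0 hq) qN; lra.
apply: le_trans (le_linfty_norm (psi x) x); have [_ _ <-] := f_spec x.
exact: ler_norm.
Qed.

End Embedding.

Section Classes.
Variables (R : realType) (G : zmodType) (p : G -> R).
Hypothesis hp : is_value p.

Lemma class_O0P : class_O0 p <-> forall x, value_inf p x = 0.
Proof. by rewrite /class_O0 (p0starE hp). Qed.

Lemma class_OinfP : class_Oinf p <-> nat_homogeneous p.
Proof.
rewrite /class_Oinf (p0starE hp); split => [p_inf x n|/(value_inf_id hp)->//].
by rewrite -!p_inf (value_inf_homogeneous hp).
Qed.

Lemma class_O1P : class_O1 p <-> forall x, value_inf p x = 0 -> x = 0.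
Proof.
rewrite /class_O1 (p0starE hp); split => [[_ [inf_eq0 _]] x /inf_eq0 //|inj].
split; [exact: value_inf_ge0|split; [|split]].
- by move=> x; split => [/inj //|->]; exact: value_inf0.
- exact: value_infN.
- exact: value_inf_subadditive.
Qed.

Lemma value_inf_isometric_embedding :
  exists psi : G -> linfty R G, is_group_hom psi /\ forall x, `|psi x| = value_inf p x.
Proof.
apply: sublinear_isometric_embedding.
- exact: value_inf_subadditive.
- exact: value_inf_homogeneous.
- exact: value_infN.
Qed.

End Classes.

Unset Implicit Arguments.

Theorem theorem2p10 (R : realType) (G : zmodType) (p : G -> R) (hp : is_value p) :
  (class_O0 p <->
     ~ exists (E : completeNormedModType R) (psi : G -> E),
         bounded_hom p psi /\ exists x, psi x <> 0) /\
  (class_Oinf p <->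
     exists (E : completeNormedModType R) (psi : G -> E), isometric_hom p psi) /\
  ((class_O1 p <->
     exists (E : completeNormedModType R) (psi : G -> E),
       nonexpansive_hom p psi /\ trivial_kernel psi) /\
   (class_O1 p <->
     exists (E : completeNormedModType R) (psi : G -> E),
       bounded_hom p psi /\ trivial_kernel psi)).
Proof.
have [psi [psi_hom psi_norm]] := value_inf_isometric_embedding hp.
have psi_nonexp : nonexpansive_hom p psi.
  by split => // x; rewrite psi_norm value_inf_le_value.
have psi_eq0 x : psi x = 0 -> value_inf p x = 0 by rewrite -psi_norm => ->; rewrite normr0.
have bounded_O1 (E : normedModType R) (phi : G -> E) :
    bounded_hom p phi -> trivial_kernel phi -> class_O1 p.
  move=> phi_b phi_ker; apply/(class_O1P hp) => x.
  by move/(bounded_hom_value_inf_eq0 hp phi_b)/phi_ker.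
split; [|split; [|split]].
- rewrite (class_O0P hp); split => [inf0 [E [phi [phi_b [x phi_x]]]] | no_hom x].
    by apply: phi_x; exact: bounded_hom_value_inf_eq0 hp phi_b (inf0 x).
  apply: contra_notP no_hom => px0; exists (linfty R G), psi.
  by split; [exact: nonexpansive_bounded_hom|exists x => /psi_eq0].
- rewrite (class_OinfP hp); split => [p_hom|[E [phi /isometric_hom_homogeneous //]]].
  have [phi phi_iso] := sublinear_isometric_embedding (valueD hp) p_hom (valueN hp).
  by exists (linfty R G), phi.
- split => [/(class_O1P hp) inj|[E [phi [/nonexpansive_bounded_hom]]]];
    last exact: bounded_O1.
  by exists (linfty R G), psi; split => // x /psi_eq0 /inj.
- split => [/(class_O1P hp) inj|[E [phi []]]]; last exact: bounded_O1.
  exists (linfty R G), psi.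
  by split; [exact: nonexpansive_bounded_hom|move=> x /psi_eq0 /inj].
Qed.
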